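(* Let $\mathbb K\subset\mathbb{R}^{d_{\mathrm{input}}}$ be bounded and let $\tilde g:\mathbb K\to\mathbb{R}$ be 1-Lipschitz with respect to the $\ell_\infty$-norm, i.e. $|\tilde g(\mathbf x_1)-\tilde g(\mathbf x_2)|\le\|\mathbf x_1-\mathbf x_2\|_\infty$. Then for every $\epsilon>0$ there exists an $\ell_\infty$-dist net $g$ with scalar output, all of whose layers have width at most $d_{\mathrm{input}}+2$, such that $|g(\mathbf x)-\tilde g(\mathbf x)|\le\epsilon$ for all $\mathbf x\in\mathbb K$.
   Context: An $L$-layer $\ell_\infty$-dist net takes $\mathbf x^{(0)}=\mathbf x\in\mathbb{R}^{d_{\mathrm{input}}}$ and computes, for $1\le l\le L$, $1\le k\le d_l$, $x^{(l)}_k=\|\mathbf x^{(l-1)}-\mathbf w^{(l,k)}\|_\infty+b^{(l,k)}$, with arbitrary real parameters $\mathbf w^{(l,k)}\in\mathbb{R}^{d_{l-1}}$ ($d_0=d_{\mathrm{input}}$) and $b^{(l,k)}\in\mathbb{R}$; its width is $\max_l d_l$. For a scalar-output net ($d_L=1$) the computed function is $g(\mathbf x)=-x^{(L)}_1$. The depth $L$ is arbitrary (finite). *)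

From HB Require Import structures.
From mathcomp Require Import all_boot all_order all_algebra.
From mathcomp Require Import reals.
Set Implicit Arguments. Unset Strict Implicit. Unset Printing Implicit Defensive.
Import Order.TTheory GRing.Theory Num.Theory.
Local Open Scope ring_scope.

Definition linf (R : realType) (n : nat) (x : 'I_n -> R) : R :=
  \big[Num.max/0]_(i < n) `|x i|.

Definition dist_layer (R : realType) (din dout : nat)
  (w : 'I_dout -> 'I_din -> R) (b : 'I_dout -> R) (x : 'I_din -> R)
  : 'I_dout -> R :=
  fun k => linf (fun j => x j - w k j) + b k.

Inductive distnet (R : realType) : nat -> nat -> Type :=
| DLast (din dout : nat) (w : 'I_dout -> 'I_din -> R) (b : 'I_dout -> R) :
    distnet R din dout
| DCons (din dmid dout : nat) (w : 'I_dmid -> 'I_din -> R) (b : 'I_dmid -> R) :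
    distnet R dmid dout -> distnet R din dout.

Fixpoint net_eval (R : realType) (din dout : nat) (N : distnet R din dout)
  : ('I_din -> R) -> 'I_dout -> R :=
  match N with
  | DLast _ _ w b => dist_layer w b
  | DCons _ _ _ w b rest => fun x => net_eval rest (dist_layer w b x)
  end.

Fixpoint net_width (R : realType) (din dout : nat) (N : distnet R din dout) : nat :=
  match N with
  | DLast _ dout _ _ => dout
  | DCons _ dmid _ _ _ rest => maxn dmid (net_width rest)
  end.

Definition net_fun (R : realType) (din : nat) (N : distnet R din 1)
  (x : 'I_din -> R) : R := - net_eval N x ord0.

(* By the Lipschitz condition, max_{a in S} (gt a - |x - a|) over a finite
   2h-net S of K lies in [gt x - 4h, gt x].  A width d + 2 net keeps x
   (offset by a large constant C) in d neurons and a running maximum m in the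
   two others.  Two layers update m to max(m, c - max(|x - a|, |m - w|));
   letting the level w climb a grid of mesh h drags m up until it reaches
   c - |x - a| - h, so after all sweeps m lies in [gt x - 5h, gt x]. *)

From Stdlib Require Import Classical FunctionalExtensionality.
From HB Require Import structures.
From mathcomp Require Import all_boot all_order all_algebra.
From mathcomp Require Import reals.
From mathcomp Require Import lra.
Set Implicit Arguments. Unset Strict Implicit. Unset Printing Implicit Defensive.
Import Order.TTheory GRing.Theory Num.Theory.
Local Open Scope ring_scope.

Section Linf.
Variables (R : realType) (n : nat).
Implicit Types (u v w : 'I_n -> R) (t : R).

Lemma linf_ge0 v : 0 <= linf v.
Proof. by rewrite /linf; elim/big_ind: _ => // x y; rewrite le_max => ->. Qed.

Lemma normr_le_linf v i : `|v i| <= linf v.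
Proof. exact: le_bigmax. Qed.

Lemma linf_le v t : 0 <= t -> (forall i, `|v i| <= t) -> linf v <= t.
Proof. by move=> t0 vt; apply: bigmax_le. Qed.

Lemma linf_eq_norm v i : (forall j, `|v j| <= `|v i|) -> linf v = `|v i|.
Proof. by move=> vi; apply/le_anti; rewrite normr_le_linf linf_le. Qed.

Lemma linf_triangle u v w :
  linf (fun i => u i - w i) <= linf (fun i => u i - v i) + linf (fun i => w i - v i).
Proof.
apply: linf_le => [|i]; first by rewrite addr_ge0 ?linf_ge0.
have -> : u i - w i = (u i - v i) - (w i - v i) by rewrite opprB addrA subrK.
exact: le_trans (ler_normB _ _) (lerD (normr_le_linf _ _) (normr_le_linf _ _)).
Qed.

Lemma linf_sub_le u v : linf (fun i => u i - v i) <= linf u + linf v.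
Proof.
apply: linf_le => [|i]; first by rewrite addr_ge0 ?linf_ge0.
exact: le_trans (ler_normB _ _) (lerD (normr_le_linf _ _) (normr_le_linf _ _)).
Qed.

End Linf.

Section TwoRegisters.
Variable d : nat.

Definition vcat2 (T : Type) (y : 'I_d -> T) (u v : T) : 'I_(d + 2) -> T :=
  fun j => match split j with inl k => y k | inr t => if t == ord0 then u else v end.

Lemma vcat2_lshift T (y : 'I_d -> T) u v k : vcat2 y u v (lshift 2 k) = y k.
Proof. by rewrite /vcat2 (unsplitK (inl _ k)). Qed.

Lemma vcat2_sub (R : realType) (y y' : 'I_d -> R) u u' v v' :
  (fun j => vcat2 y u v j - vcat2 y' u' v' j) =
  vcat2 (fun k => y k - y' k) (u - u') (v - v').
Proof.
by apply: functional_extensionality => j; rewrite /vcat2; case: split => // t; case: ifP.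
Qed.

Lemma linf_vcat2 (R : realType) (y : 'I_d -> R) u v :
  linf (vcat2 y u v) = Num.max (linf y) (Num.max `|u| `|v|).
Proof.
apply/le_anti/andP; split.
  apply: linf_le => [|j]; first by rewrite le_max linf_ge0.
  rewrite /vcat2; case: split => [k|t]; first by rewrite le_max normr_le_linf.
  by rewrite !le_max; case: ifP => _; rewrite lexx !orbT.
rewrite !ge_max; apply/and3P; split.
- apply: linf_le => [|k]; first exact: linf_ge0.
  by rewrite -(vcat2_lshift y u v) normr_le_linf.
- by have := normr_le_linf (vcat2 y u v) (rshift d ord0); rewrite /vcat2 (unsplitK (inr _ _)).
- by have := normr_le_linf (vcat2 y u v) (rshift d ord_max); rewrite /vcat2 (unsplitK (inr _ _)).
Qed.

Lemma dist_layer_vcat2 (R : realType) din (W : 'I_d -> 'I_din -> R) r0 r1 b b0 b1 z :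
  dist_layer (vcat2 W r0 r1) (vcat2 b b0 b1) z =
  vcat2 (fun k => linf (fun j => z j - W k j) + b k)
    (linf (fun j => z j - r0 j) + b0) (linf (fun j => z j - r1 j) + b1).
Proof.
by apply: functional_extensionality => j; rewrite /dist_layer /vcat2; case: split => // t; case: ifP.
Qed.

End TwoRegisters.

Section Layers.
Variables (R : realType) (d : nat) (C : R).
Implicit Types (x a : 'I_d -> R) (B u v m p c w : R).

(* Offsetting the x-part by C keeps it the dominant coordinate of every
   l_inf distance to a copy row, which therefore reproduces it. *)
Definition state x u v : 'I_(d + 2) -> R := vcat2 (fun k => x k + C) (u + C) (v + C).

Definition copy_row (k : 'I_d) : 'I_(d + 2) -> R :=
  vcat2 (fun j => if j == k then 0 else C) C C.

Definition reg_bias b0 b1 : 'I_(d + 2) -> R := vcat2 (fun _ => 0) b0 b1.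

Lemma state_sub_offset x u v r s :
  (fun j => state x u v j - vcat2 (fun _ => C) r s j) = vcat2 x (u + C - r) (v + C - s).
Proof.
rewrite vcat2_sub; congr vcat2.
by apply: functional_extensionality => k; rewrite addrK.
Qed.

Lemma dist_layer_state x u v B r0 r1 b0 b1 :
  (forall k, `|x k| <= B) -> `|u| <= C - B -> `|v| <= C - B -> 2 * B <= C ->
  dist_layer (vcat2 copy_row r0 r1) (reg_bias b0 b1) (state x u v) =
  vcat2 (fun k => x k + C)
    (linf (fun j => state x u v j - r0 j) + b0) (linf (fun j => state x u v j - r1 j) + b1).
Proof.
move=> xB uB vB CB; rewrite dist_layer_vcat2; congr vcat2.
apply: functional_extensionality => k.
have /andP[xk1 xk2] : - B <= x k <= B by rewrite -ler_norml.
rewrite /copy_row vcat2_sub linf_vcat2 addr0 (@linf_eq_norm _ _ _ k) => [|j].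
  rewrite eqxx subr0 !addrK (ger0_norm (_ : 0 <= x k + C)); last lra.
  by apply: max_l; rewrite ge_max (le_trans uB) ?(le_trans vB) //; lra.
rewrite eqxx subr0 (ger0_norm (_ : 0 <= x k + C)); last lra.
have /andP[xj1 xj2] : - B <= x j <= B by rewrite -ler_norml.
by case: eqP => [->|_]; rewrite ?subr0 ?addrK ler_norml; apply/andP; split; lra.
Qed.

Definition input_weights : 'I_(d + 2) -> 'I_d -> R :=
  vcat2 (fun k j => if j == k then - C else 0) (fun _ => 0) (fun _ => 0).

Lemma input_layer_state x B :
  (forall k, `|x k| <= B) -> 2 * B <= C ->
  dist_layer input_weights (reg_bias (C - B) (C - B)) x =
  state x (linf x - B) (linf x - B).
Proof.
move=> xB CB; rewrite dist_layer_vcat2 /state.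
have -> : (fun j => x j - 0) = x by apply: functional_extensionality => j; rewrite subr0.
have -> : linf x + (C - B) = linf x - B + C by lra.
congr vcat2; apply: functional_extensionality => k.
have /andP[xk1 xk2] : - B <= x k <= B by rewrite -ler_norml.
rewrite addr0 (@linf_eq_norm _ _ _ k) => [|j]; rewrite eqxx opprK.
  by rewrite ger0_norm //; lra.
have /andP[xj1 xj2] : - B <= x j <= B by rewrite -ler_norml.
rewrite (ger0_norm (_ : 0 <= x k + C)); last lra.
by case: eqP => [->|_]; rewrite ?opprK ?subr0 ler_norml; apply/andP; split; lra.
Qed.

Definition gauge_weights a w : 'I_(d + 2) -> 'I_(d + 2) -> R :=
  vcat2 copy_row (vcat2 (fun k => a k + C) (w + C) (w + C)) (vcat2 (fun _ => C) 0 0).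

Lemma gauge_layer_state x a m w B :
  let p := Num.max (linf (fun k => x k - a k)) `|m - w| in
  (forall k, `|x k| <= B) -> `|m| <= B -> p <= C - B -> 2 * B <= C ->
  dist_layer (gauge_weights a w) (reg_bias C 0) (state x m m) = state x p m.
Proof.
move=> p xB mB pB CB; have xB' := linf_le (le_trans (normr_ge0 m) mB) xB.
have /andP[m1 m2] : - B <= m <= B by rewrite -ler_norml.
have pCB : `|p| <= C - B by rewrite ger0_norm // le_max linf_ge0.
have mCB : `|m| <= C - B by apply: le_trans mB _; lra.
rewrite (dist_layer_state (B := B)) // state_sub_offset /state vcat2_sub !linf_vcat2 !maxxx.
congr vcat2; last by rewrite subr0 addr0 ger0_norm ?max_r //; lra.
congr (Num.max _ _ + C); first congr linf.
- by apply: functional_extensionality => k; rewrite opprD addrACA subrr addr0.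
- by rewrite opprD addrACA subrr addr0.
Qed.

Definition update_row c : 'I_(d + 2) -> R := vcat2 (fun _ => C) (c + C *+ 2) 0.

Definition update_weights c := vcat2 copy_row (update_row c) (update_row c).

Lemma update_layer_state x p m c B :
  (forall k, `|x k| <= B) -> `|m| <= B -> `|c| <= B -> 0 <= p <= C - B -> 2 * B <= C ->
  dist_layer (update_weights c) (reg_bias 0 0) (state x p m) =
  state x (Num.max m (c - p)) (Num.max m (c - p)).
Proof.
move=> xB mB cB /andP[p0 pB] CB; have xB' := linf_le (le_trans (normr_ge0 m) mB) xB.
have /andP[m1 m2] : - B <= m <= B by rewrite -ler_norml.
have /andP[c1 c2] : - B <= c <= B by rewrite -ler_norml.
have pCB : `|p| <= C - B by rewrite ger0_norm.
have mCB : `|m| <= C - B by apply: le_trans mB _; lra.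
rewrite (dist_layer_state (B := B)) //.
rewrite /update_row state_sub_offset linf_vcat2 subr0 !addr0.
rewrite (ler0_norm (_ : p + C - (c + C *+ 2) <= 0)); last by rewrite mulr2n; lra.
rewrite ger0_norm; last lra.
rewrite max_r; last by rewrite le_max; apply/orP; right; lra.
rewrite (_ : - (p + C - (c + C *+ 2)) = c - p + C); last by rewrite mulr2n; lra.
by rewrite maxC -addr_maxl.
Qed.

Definition output_weights : 'I_1 -> 'I_(d + 2) -> R :=
  fun _ => vcat2 (fun _ => C) (C *+ 2) (C *+ 2).

Lemma output_layer_state x m B :
  (forall k, `|x k| <= B) -> `|m| <= B -> 2 * B <= C ->
  dist_layer output_weights (fun _ => - C) (state x m m) ord0 = - m.
Proof.
move=> xB mB CB; have xB' := linf_le (le_trans (normr_ge0 m) mB) xB.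
have /andP[m1 m2] : - B <= m <= B by rewrite -ler_norml.
rewrite /dist_layer /output_weights state_sub_offset linf_vcat2 maxxx.
rewrite ler0_norm; last by rewrite mulr2n; lra.
by rewrite max_r; rewrite mulr2n; lra.
Qed.

End Layers.

Section InflationaryFold.
Context {disp : Order.disp_t} {X : porderType disp} {T : Type} (op : X -> T -> X).
Hypothesis op_ge : forall m t, (m <= op m t)%O.

Lemma foldl_ge m s : (m <= foldl op m s)%O.
Proof. by elim: s m => //= t s IHs m; apply: le_trans (op_ge m t) (IHs _). Qed.

Lemma foldl_flatten_ge (I : eqType) (F : I -> seq T) (s : seq I) i m :
  i \in s -> exists2 m1, (m <= m1)%O & (foldl op m1 (F i) <= foldl op m (flatten (map F s)))%O.
Proof.
case/splitPr: s / => s1 s2; rewrite map_cat flatten_cat /= !foldl_cat.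
by exists (foldl op m (flatten (map F s1))); rewrite foldl_ge.
Qed.

End InflationaryFold.

Section Sweep.
Variables (R : realType) (d : nat).
Local Notation instr := ({ffun 'I_d -> R} * R * R)%type.
Implicit Types (x : 'I_d -> R) (a : {ffun 'I_d -> R}) (l : seq instr)
  (f : {ffun 'I_d -> R} -> R) (S : seq {ffun 'I_d -> R}) (B W C g h m c w : R) (J : nat).

Definition step x m (t : instr) : R :=
  let: (a, c, w) := t in Num.max m (c - Num.max (linf (fun k => x k - a k)) `|m - w|).

Fixpoint sweep_net C dout l (tail : distnet R (d + 2) dout) : distnet R (d + 2) dout :=
  if l is (a, c, w) :: l' then
    DCons (gauge_weights C a w) (reg_bias C 0)
      (DCons (update_weights C c) (reg_bias 0 0) (sweep_net C l' tail))
  else tail.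

Lemma sweep_net_width C dout l (tail : distnet R (d + 2) dout) :
  (net_width tail <= d + 2)%N -> (net_width (sweep_net C l tail) <= d + 2)%N.
Proof. by move=> tail_w; elim: l => [|[[a c] w] l IHl] //=; rewrite !geq_max leqnn. Qed.

Lemma step_ge x m t : m <= step x m t.
Proof. by case: t => [[a c] w]; rewrite le_max lexx. Qed.

Lemma step_abs_le x B m a c w : `|m| <= B -> `|c| <= B -> `|step x m (a, c, w)| <= B.
Proof.
rewrite !ler_norml => /andP[m1 m2] /andP[c1 c2].
have p0 : 0 <= Num.max (linf (fun k => x k - a k)) `|m - w| by rewrite le_max linf_ge0.
by rewrite le_max m1 ge_max m2 /=; lra.
Qed.

Lemma net_eval_sweep_net C B W x m dout l (tail : distnet R (d + 2) dout) :
  (forall k, `|x k| <= B) -> `|m| <= B -> 3 * B + W <= C ->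
  (forall a c w, (a, c, w) \in l -> [/\ forall k, `|a k| <= B, `|c| <= B & `|w| <= W]) ->
  net_eval (sweep_net C l tail) (state C x m m) =
  net_eval tail (state C x (foldl (step x) m l) (foldl (step x) m l)).
Proof.
move=> xB; elim: l m => [//|[[a c] w] l IHl] m mB CB lB /=.
have [aB cB wB] := lB a c w (mem_head _ _).
have /andP[m1 m2] : - B <= m <= B by rewrite -ler_norml.
have /andP[w1 w2] : - W <= w <= W by rewrite -ler_norml.
pose p := Num.max (linf (fun k => x k - a k)) `|m - w|.
have p0 : 0 <= p by rewrite le_max linf_ge0.
have pB : p <= C - B.
  rewrite ge_max; apply/andP; split; last by rewrite ler_norml; apply/andP; split; lra.
  apply: linf_le => [|k]; first lra.
  by apply: le_trans (ler_normB _ _) _; have := xB k; have := aB k; lra.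
have CB2 : 2 * B <= C by have := normr_ge0 w; lra.
rewrite (gauge_layer_state (B := B)) // (update_layer_state (B := B)) ?p0 ?pB //.
rewrite IHl //; first exact: step_abs_le.
by move=> a' c' w' l'; apply: lB; rewrite in_cons l' orbT.
Qed.

Lemma foldl_step_le x g m l : m <= g ->
  (forall a c w, (a, c, w) \in l -> c - linf (fun k => x k - a k) <= g) ->
  foldl (step x) m l <= g.
Proof.
elim: l m => //= [[[a c] w]] l IHl m mg lg; apply: IHl => [|a' c' w' l'].
  rewrite ge_max mg; apply: le_trans (lg a c w (mem_head _ _)).
  by rewrite lerB // le_max lexx.
by apply: (lg a' c' w'); rewrite in_cons l' orbT.
Qed.

Lemma foldl_step_abs_le x B m l : `|m| <= B ->
  (forall a c w, (a, c, w) \in l -> `|c| <= B) -> `|foldl (step x) m l| <= B.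
Proof.
elim: l m => //= [[[a c] w]] l IHl m mB lB; apply: IHl => [|a' c' w' l'].
  exact: step_abs_le mB (lB a c w (mem_head _ _)).
by apply: (lB a' c' w'); rewrite in_cons l' orbT.
Qed.

Lemma step_scan x a c w h m : 0 <= h ->
  c - linf (fun k => x k - a k) - h <= m \/ w - h <= m ->
  c - linf (fun k => x k - a k) - h <= step x m (a, c, w) \/ w <= step x m (a, c, w).
Proof.
move=> h0 m_inv; have m_le := step_ge x m (a, c, w).
have [Tm|mT] := leP (c - linf (fun k => x k - a k) - h) m.
  by left; apply: le_trans m_le.
have [wm|mw] := leP w m; first by right; apply: le_trans m_le.
left; case: m_inv => m_inv; first by move: mT; rewrite ltNge m_inv.
rewrite le_max; apply/orP; right.
have mwh : `|m - w| <= h by rewrite ler_norml; apply/andP; split; lra.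
suff : Num.max (linf (fun k => x k - a k)) `|m - w| <= linf (fun k => x k - a k) + h.
  by lra.
by rewrite ge_max lerDl h0 (le_trans mwh) // lerDr linf_ge0.
Qed.

(* The register either already exceeds c - |x - a| - h, or it is dragged up
   level after level, staying within h of the current level. *)
Lemma foldl_step_scan x a c w0 h m n s : 0 <= h ->
  c - linf (fun k => x k - a k) - h <= m \/ w0 + s%:R * h - h <= m ->
  let m' := foldl (step x) m [seq (a, c, w0 + j%:R * h) | j <- iota s n] in
  c - linf (fun k => x k - a k) - h <= m' \/ w0 + (s + n)%:R * h - h <= m'.
Proof.
move=> h0; elim: n s m => [|n IHn] s m; first by rewrite addn0.
move=> m_inv /=; rewrite -addSnnS; apply: IHn.
case: (step_scan h0 m_inv) => ?; [by left | right].
by rewrite -addn1 natrD mulrDl mul1r addrA addrK.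
Qed.

Definition program f S B h J : seq instr :=
  [seq (a, f a, - B + j%:R * h) | a <- S, j <- iota 0 J.+1].

Lemma foldl_program_le x f S B h J g m : m <= g ->
  (forall a, a \in S -> f a - linf (fun k => x k - a k) <= g) ->
  foldl (step x) m (program f S B h J) <= g.
Proof.
move=> mg Sg; apply: foldl_step_le => // a c w /allpairsP[[a' j] /= [Sa' _ [-> -> _]]].
exact: Sg.
Qed.

Lemma foldl_program_ge x f S B h J a m : 0 <= h -> 2 * B <= J%:R * h ->
  a \in S -> f a <= B -> - B <= m ->
  f a - linf (fun k => x k - a k) - h <= foldl (step x) m (program f S B h J).
Proof.
move=> h0 JB Sa faB mB.
have [m1 mm1 m1_le] := foldl_flatten_ge (step_ge x)
  (fun a => [seq (a, f a, - B + j%:R * h) | j <- iota 0 J.+1]) m Sa.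
apply: le_trans m1_le.
case: (@foldl_step_scan x a (f a) (- B) h m1 J.+1 0 h0) => [|//|]; first by right; lra.
rewrite add0n -addn1 natrD mulrDl mul1r addrA addrK => hi; apply: le_trans hi.
by have := linf_ge0 (fun k => x k - a k); lra.
Qed.

Definition approx_net f S B h J : distnet R d 1 :=
  let C := 4 * B + J%:R * h in
  DCons (input_weights C) (reg_bias (C - B) (C - B))
    (sweep_net C (program f S B h J) (DLast (output_weights C) (fun _ => - C))).

Lemma approx_net_width f S B h J : (net_width (approx_net f S B h J) <= d + 2)%N.
Proof. by rewrite /= geq_max leqnn; apply: sweep_net_width; rewrite /= addn2. Qed.

Lemma net_fun_approx_net f S B h J x : 0 <= B -> 0 <= h ->
  (forall k, `|x k| <= B) -> (forall a, a \in S -> forall k, `|a k| <= B) ->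
  (forall a, a \in S -> `|f a| <= B) ->
  net_fun (approx_net f S B h J) x = foldl (step x) (linf x - B) (program f S B h J).
Proof.
move=> B0 h0 xB SB fB; set C := 4 * B + J%:R * h.
have Jh0 : 0 <= J%:R * h by rewrite mulr_ge0.
have CB : 2 * B <= C by rewrite /C; lra.
have m0B : `|linf x - B| <= B.
  have := linf_ge0 x; have := linf_le B0 xB.
  by rewrite ler_norml => ? ?; apply/andP; split; lra.
have lB a c w : (a, c, w) \in program f S B h J ->
    [/\ forall k, `|a k| <= B, `|c| <= B & `|w| <= B + J%:R * h].
  case/allpairsP => [[a' j] [Sa' jJ [-> -> ->]]]; split; [exact: SB | exact: fB |].
  rewrite mem_iota add0n ltnS in jJ.
  have : j%:R * h <= J%:R * h by rewrite ler_wpM2r ?ler_nat.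
  have := mulr_ge0 (ler0n R j) h0.
  by rewrite ler_norml => ? ?; apply/andP; split; lra.
rewrite /net_fun /= (input_layer_state (B := B)) //.
rewrite (net_eval_sweep_net (B := B) (W := B + J%:R * h)) //; last by rewrite /C; lra.
rewrite /= (output_layer_state (B := B)) ?opprK //.
by apply: foldl_step_abs_le => // a c w /lB[].
Qed.

Lemma approx_net_bounds f S B h J x g a : 0 <= B -> 0 <= h -> 2 * B <= J%:R * h ->
  (forall k, `|x k| <= B) -> (forall a, a \in S -> forall k, `|a k| <= B) ->
  (forall a, a \in S -> `|f a| <= B) ->
  linf x - B <= g -> (forall a, a \in S -> f a - linf (fun k => x k - a k) <= g) ->
  a \in S ->
  f a - linf (fun k => x k - a k) - h <= net_fun (approx_net f S B h J) x <= g.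
Proof.
move=> B0 h0 JB xB SB fB x_g S_g Sa; rewrite net_fun_approx_net //.
rewrite foldl_program_le // andbT foldl_program_ge //.
  by have := fB a Sa; rewrite ler_norml => /andP[].
by have := linf_ge0 x; lra.
Qed.

End Sweep.

Lemma exists_nat_mul_gt (R : realType) (h y : R) : 0 < h -> exists n : nat, y < n%:R * h.
Proof.
move=> h0; have y0 : 0 <= Num.max 0 y by rewrite le_max lexx.
exists (Num.Def.archi_bound (Num.max 0 y / h)).
have := archi_boundP (divr_ge0 y0 (ltW h0)); rewrite ltr_pdivrMr //.
by apply: le_lt_trans; rewrite le_max lexx orbT.
Qed.

Lemma nat_grid_near (R : realType) (n : nat) (h y : R) : 0 <= h -> 0 <= y <= n%:R * h ->
  exists i : 'I_n.+1, `|y - i%:R * h| <= h.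
Proof.
move=> h0; elim: n => [|n IHn] /andP[y0 yn].
  by exists ord0; rewrite mul0r subr0 ger0_norm //; rewrite mul0r in yn; lra.
have [yn'|ny] := leP y (n%:R * h).
  by have [i yi] := IHn (introT andP (conj y0 yn')); exists (widen_ord (leqnSn _) i).
exists ord_max; rewrite ler_norml; move: yn; rewrite /= -addn1 natrD mulrDl mul1r.
by move=> ?; apply/andP; split; lra.
Qed.

Section FiniteNet.
Variables (R : realType) (d : nat).
Implicit Types (K : ('I_d -> R) -> Prop) (M h : R).

Lemma linf_ball_grid_cover M h : 0 < h -> exists P : seq {ffun 'I_d -> R},
  forall x, linf x <= M -> exists2 p, p \in P & linf (fun k => x k - p k) <= h.
Proof.
move=> h0; have [n Mn] := exists_nat_mul_gt (2 * M) h0.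
pose grid_point (g : {ffun 'I_d -> 'I_n.+1}) := [ffun k => - M + (g k)%:R * h].
exists [seq grid_point g | g <- enum {ffun 'I_d -> 'I_n.+1}] => x xM.
have /fin_all_exists[g xg] : forall k, exists i : 'I_n.+1, `|x k + M - i%:R * h| <= h.
  move=> k; apply: nat_grid_near; first exact: ltW.
  have := le_trans (normr_le_linf x k) xM; rewrite ler_norml => /andP[? ?].
  by apply/andP; split; lra.
exists (grid_point [ffun k => g k]); first by rewrite map_f ?mem_enum.
apply: linf_le => [|k]; first exact: ltW.
by rewrite !ffunE opprD opprK addrA.
Qed.

Lemma cover_refine K h (P : seq {ffun 'I_d -> R}) :
  exists S : seq {ffun 'I_d -> R}, (forall a, a \in S -> K a) /\
    forall x, K x -> forall p, p \in P -> linf (fun k => x k - p k) <= h ->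
    exists2 a, a \in S & linf (fun k => x k - a k) <= 2 * h.
Proof.
elim: P => [|p P [S [SK S_cover]]]; first by exists [::].
have [[a [Ka ap]]|no_a] := classic (exists a, K a /\ linf (fun k => a k - p k) <= h).
- have aE : fun_of_fin [ffun k => a k] = a.
    by apply: functional_extensionality => k; rewrite ffunE.
  exists ([ffun k => a k] :: S); split=> [a'|x Kx p'].
    by rewrite in_cons => /orP[/eqP -> | /SK]; rewrite ?aE.
  rewrite in_cons => /orP[/eqP -> xp|/S_cover cov /(cov x Kx)[a' Sa' xa']].
    exists [ffun k => a k]; rewrite ?mem_head // aE.
    by apply: le_trans (linf_triangle x p a) _; lra.
  by exists a' => //; rewrite in_cons Sa' orbT.
- exists S; split=> // x Kx p'; rewrite in_cons => /orP[/eqP -> xp|/S_cover]; last exact.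
  by case: no_a; exists x.
Qed.

Lemma bounded_finite_net K M h : 0 < h -> (forall x, K x -> linf x <= M) ->
  exists S : seq {ffun 'I_d -> R}, (forall a, a \in S -> K a) /\
    forall x, K x -> exists2 a, a \in S & linf (fun k => x k - a k) <= 2 * h.
Proof.
move=> h0 KM; have [P P_cover] := linf_ball_grid_cover M h0.
have [S [SK S_cover]] := cover_refine K h P.
exists S; split=> // x Kx; have [p Pp xp] := P_cover x (KM x Kx).
exact: S_cover Pp xp.
Qed.

Lemma lipschitz_bounded_on K (g : ('I_d -> R) -> R) M :
  (forall x, K x -> linf x <= M) ->
  (forall x1 x2, K x1 -> K x2 -> `|g x1 - g x2| <= linf (fun i => x1 i - x2 i)) ->
  exists G, 0 <= G /\ forall x, K x -> `|g x| <= G.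
Proof.
move=> KM g_lip; have [[x0 Kx0]|K0] := classic (exists x, K x); last first.
  by exists 0; split=> // x Kx; case: K0; exists x.
exists (`|g x0| + 2 * M); split=> [|x Kx].
  by have := le_trans (linf_ge0 x0) (KM x0 Kx0); have := normr_ge0 (g x0); lra.
have := lerB_dist (g x) (g x0); have := g_lip x x0 Kx Kx0.
by have := linf_sub_le x x0; have := KM x Kx; have := KM x0 Kx0; lra.
Qed.

End FiniteNet.

Theorem theorem1 (R : realType) (d : nat) (K : ('I_d -> R) -> Prop)
  (gt : ('I_d -> R) -> R) :
  (exists M : R, forall x, K x -> linf x <= M) ->
  (forall x1 x2, K x1 -> K x2 -> `|gt x1 - gt x2| <= linf (fun i => x1 i - x2 i)) ->
  forall eps : R, 0 < eps ->
  exists N : distnet R d 1,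
    (net_width N <= d + 2)%N /\
    (forall x, K x -> `|net_fun N x - gt x| <= eps).
Proof.
move=> [M KM] gt_lip eps eps0.
pose h := eps / 5; have h0 : 0 < h by rewrite divr_gt0.
have [S [SK S_dense]] := bounded_finite_net h0 KM.
have [G [G0 gtG]] := lipschitz_bounded_on KM gt_lip.
pose B := G + `|M|; have B0 : 0 <= B by rewrite addr_ge0.
have xB x : K x -> forall k, `|x k| <= B.
  move=> Kx k; rewrite (le_trans (normr_le_linf x k)) // (le_trans (KM x Kx)) //.
  by rewrite (le_trans (ler_norm M)) // lerDr.
have gtB x : K x -> `|gt x| <= B by move/gtG/le_trans; apply; rewrite lerDl.
have [J JB] := exists_nat_mul_gt (2 * B) h0.
exists (approx_net (fun a => gt a) S B h J); split=> [|x Kx]; first exact: approx_net_width.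
have x_g : linf x - B <= gt x.
  have := gtG x Kx; have := KM x Kx; have := ler_norm M.
  by rewrite ler_norml /B => ? ? /andP[? ?]; lra.
have S_g a : a \in S -> gt a - linf (fun k => x k - a k) <= gt x.
  by move=> Sa; have := gt_lip x a Kx (SK a Sa); rewrite ler_norml => /andP[? ?]; lra.
have [a Sa xa] := S_dense x Kx.
have /andP[lower upper] := approx_net_bounds B0 (ltW h0) (ltW JB) (xB x Kx)
  (fun a Sa => xB a (SK a Sa)) (fun a Sa => gtB a (SK a Sa)) x_g S_g Sa.
have := gt_lip x a Kx (SK a Sa); rewrite ler_norml => /andP[_ gt_a].
have heps : eps = 5 * h by rewrite /h; lra.
by rewrite ler_norml; apply/andP; split; lra.
Qed.
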